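(* Let $R$ be a commutative ring and $A=(a_{ij})$, $B=(b_{jk})$ be $3\times 3$ matrices over $R$. Define, for $r=1,2,3$ and $s=6(r-1)$: $p_{s+1}=(a_{r2}+b_{12})(a_{r1}+b_{21})$, $p_{s+2}=(a_{r3}+b_{13})(a_{r1}+b_{31})$, $p_{s+3}=(a_{r3}+b_{23})(a_{r2}+b_{32})$, $p_{s+4}=a_{r1}(b_{11}-b_{12}-b_{13}-a_{r2}-a_{r3})$, $p_{s+5}=a_{r2}(b_{22}-b_{21}-b_{23}-a_{r1}-a_{r3})$, $p_{s+6}=a_{r3}(b_{33}-b_{31}-b_{32}-a_{r1}-a_{r2})$, and $p_{19}=b_{12}b_{21}$, $p_{20}=b_{13}b_{31}$, $p_{21}=b_{23}b_{32}$. Then for $r=1,2,3$ with $s=6(r-1)$, the $r$-th row of $AB$ equals $\big(p_{s+4}+p_{s+1}+p_{s+2}-p_{19}-p_{20},\; p_{s+5}+p_{s+1}+p_{s+3}-p_{19}-p_{21},\; p_{s+6}+p_{s+2}+p_{s+3}-p_{20}-p_{21}\big)$. In particular, the product of two $3\times 3$ matrices over a commutative ring can be computed using $21$ multiplications.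
   Context: ''The product can be computed using $k$ multiplications'' means: there are $k$ products, each a product of two linear forms with integer coefficients in the entries of $A$ and $B$, such that every entry of $AB$ is an integer linear combination of these $k$ products, identically for all inputs over any commutative ring; additions, subtractions and multiplications by integer constants are not counted. *)

From HB Require Import structures.
From mathcomp Require Import all_boot all_order all_algebra.
Set Implicit Arguments. Unset Strict Implicit. Unset Printing Implicit Defensive.
Import GRing.Theory.
Local Open Scope ring_scope.

(* 1-based entry access, as in the paper: ent M i j = m_{ij}, for 1 <= i,j <= 3 *)
Definition ent (R : Type) (M : 'M[R]_3) (i j : nat) : R := M (inord i.-1) (inord j.-1).

(* p_{s+u} for row r (1-based) and u = 1..6, s = 6(r-1) *)
Definition prow (R : comPzRingType) (A B : 'M[R]_3) (r u : nat) : R :=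
  let a := ent A in let b := ent B in
  match u with
  | 1 => (a r 2 + b 1 2) * (a r 1 + b 2 1)
  | 2 => (a r 3 + b 1 3) * (a r 1 + b 3 1)
  | 3 => (a r 3 + b 2 3) * (a r 2 + b 3 2)
  | 4 => a r 1 * (b 1 1 - b 1 2 - b 1 3 - a r 2 - a r 3)
  | 5 => a r 2 * (b 2 2 - b 2 1 - b 2 3 - a r 1 - a r 3)
  | 6 => a r 3 * (b 3 3 - b 3 1 - b 3 2 - a r 1 - a r 2)
  | _ => 0
  end.

Definition p (R : comPzRingType) (A B : 'M[R]_3) (t : nat) : R :=
  let b := ent B in
  if (1 <= t <= 18)%N then prow A B ((t.-1) %/ 6).+1 ((t.-1) %% 6).+1
  else match t with
  | 19 => b 1 2 * b 2 1
  | 20 => b 1 3 * b 3 1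
  | 21 => b 2 3 * b 3 2
  | _ => 0
  end.

Definition linform (R : comPzRingType) (c d : 'I_3 -> 'I_3 -> int) (A B : 'M[R]_3) : R :=
  \sum_(i < 3) \sum_(j < 3) ((c i j)%:~R * A i j + (d i j)%:~R * B i j).

(* "the product of two 3x3 matrices can be computed using k multiplications":
   k products of two integer linear forms in the entries of A and B, such that
   every entry of AB is an integer linear combination of them, identically for
   all inputs over every commutative ring. *)
Definition mult3_computable_with (k : nat) : Prop :=
  exists (c1 d1 c2 d2 : 'I_k -> 'I_3 -> 'I_3 -> int)
         (w : 'I_3 -> 'I_3 -> 'I_k -> int),
  forall (R : comPzRingType) (A B : 'M[R]_3) (i j : 'I_3),
    (A *m B) i j =
    \sum_(t < k) (w i j t)%:~R * (linform (c1 t) (d1 t) A B * linform (c2 t) (d2 t) A B).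

From HB Require Import structures.
From mathcomp Require Import all_boot all_order all_algebra ring.
Import GRing.Theory.
Local Open Scope ring_scope.

(* After expanding
       the matrix product over 'I_3 and the definition of p, each identity is a
       polynomial identity in the 18 entries, checked by [ring] for each r.
   (2) The 21-multiplication scheme.  We exhibit, for every t < 21, two integer
       linear forms whose product is p_(t+1) ([scheme_products]), and integer
       weights expressing each entry of AB as a combination of the p's
       ([entry_combination], a restatement of the row identities).
   The linear forms are built from the indicator matrices [unit_coef a b] of
   the position (a, b), following the shape of the products: p_(s+1..s+3) are
   "cross" products indexed by the pairs (0,1), (0,2), (1,2), p_(s+4..s+6) are
   "diagonal" products, and p_19..p_21 are the row-independent corrections. *)

Lemma sum_ord3 (V : nmodType) (F : 'I_3 -> V) :
  \sum_(k < 3) F k = F (inord 0) + F (inord 1) + F (inord 2).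
Proof.
rewrite !big_ord_recr big_ord0 /= add0r.
by congr (F _ + F _ + F _); apply/val_inj; rewrite /= inordK.
Qed.

Lemma ord3P (r : 'I_3) : [\/ r = inord 0, r = inord 1 | r = inord 2].
Proof.
by case: r => [[|[|[|//]]] Hr]; [apply: Or31 | apply: Or32 | apply: Or33];
  apply/val_inj; rewrite /= inordK.
Qed.

Lemma row_identities (R : comPzRingType) (A B : 'M[R]_3) (r : 'I_3) :
  let s := (6 * r)%N in
  let P := p A B in
  [/\ (A *m B) r (inord 0) = P (s + 4)%N + P (s + 1)%N + P (s + 2)%N - P 19%N - P 20%N,
      (A *m B) r (inord 1) = P (s + 5)%N + P (s + 1)%N + P (s + 3)%N - P 19%N - P 21%N
    & (A *m B) r (inord 2) = P (s + 6)%N + P (s + 2)%N + P (s + 3)%N - P 20%N - P 21%N].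
Proof.
rewrite /= !mxE !sum_ord3.
by case: (ord3P r) => ->; rewrite !inordK //= /p /prow /ent /=; split; ring.
Qed.

Lemma computable_of_products (k : nat) (c1 d1 c2 d2 : 'I_k -> 'I_3 -> 'I_3 -> int)
    (w : 'I_3 -> 'I_3 -> 'I_k -> int)
    (q : forall R : comPzRingType, 'M[R]_3 -> 'M[R]_3 -> 'I_k -> R) :
  (forall (R : comPzRingType) (A B : 'M[R]_3) (t : 'I_k),
     linform (c1 t) (d1 t) A B * linform (c2 t) (d2 t) A B = q R A B t) ->
  (forall (R : comPzRingType) (A B : 'M[R]_3) (i j : 'I_3),
     (A *m B) i j = \sum_(t < k) (w i j t)%:~R * q R A B t) ->
  mult3_computable_with k.
Proof.
move=> products entries; exists c1, d1, c2, d2, w => R A B i j.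
by rewrite entries; apply: eq_bigr => t _; rewrite products.
Qed.

Definition unit_coef (a b : nat) (i j : 'I_3) : int :=
  ((i == a :> nat) && (j == b :> nat))%:Z.

Definition row_off_coef (r c : nat) (i j : 'I_3) : int :=
  ((i == r :> nat) && (j != c :> nat))%:Z.

(* The k-th index pair (lo, hi) among (0,1), (0,2), (1,2), k < 3. *)
Definition pair_lo (k : nat) : nat := (k == 2)%N.
Definition pair_hi (k : nat) : nat := (1 + (k != 0))%N.

(* Product t (that is p_(t+1)) is (a_(r,hi) + b_(lo,hi)) (a_(r,lo) + b_(hi,lo))
   for a cross term, a_(r,c) (b_(c,c) - sum_(l<>c) b_(c,l) - sum_(l<>c) a_(r,l))
   for a diagonal term, and b_(lo,hi) b_(hi,lo) for a correction term; here
   r = t / 6 and t %% 6 is k (cross) or 3 + c (diagonal), or t = 18 + k. *)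
Definition left_A (t : 'I_21) : 'I_3 -> 'I_3 -> int :=
  let r := (t %/ 6)%N in let u := (t %% 6)%N in
  if (18 <= t)%N then fun _ _ => 0
  else if (u < 3)%N then unit_coef r (pair_hi u) else unit_coef r (u - 3).
Definition left_B (t : 'I_21) : 'I_3 -> 'I_3 -> int :=
  let u := (t %% 6)%N in
  if (18 <= t)%N then unit_coef (pair_lo (t - 18)) (pair_hi (t - 18))
  else if (u < 3)%N then unit_coef (pair_lo u) (pair_hi u) else fun _ _ => 0.
Definition right_A (t : 'I_21) : 'I_3 -> 'I_3 -> int :=
  let r := (t %/ 6)%N in let u := (t %% 6)%N in
  if (18 <= t)%N then fun _ _ => 0
  else if (u < 3)%N then unit_coef r (pair_lo u)
  else fun i j => - row_off_coef r (u - 3) i j.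
Definition right_B (t : 'I_21) : 'I_3 -> 'I_3 -> int :=
  let u := (t %% 6)%N in
  if (18 <= t)%N then unit_coef (pair_hi (t - 18)) (pair_lo (t - 18))
  else if (u < 3)%N then unit_coef (pair_hi u) (pair_lo u)
  else fun i j => unit_coef (u - 3) (u - 3) i j - row_off_coef (u - 3) (u - 3) i j.

Lemma scheme_products (R : comPzRingType) (A B : 'M[R]_3) (t : 'I_21) :
  linform (left_A t) (left_B t) A B * linform (right_A t) (right_B t) A B = p A B t.+1.
Proof.
rewrite /linform !sum_ord3.
case: t => [[|[|[|[|[|[|[|[|[|[|[|[|[|[|[|[|[|[|[|[|[|//]]]]]]]]]]]]]]]]]]]]] Ht];
  rewrite /left_A /left_B /right_A /right_B /unit_coef /row_off_coef
          /p /prow /ent /= !inordK //=; ring.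
Qed.

(* Weight of p_(t+1) in entry (i, j) of AB, read off the row identities:
   +1 for the diagonal term 3 + j and the two cross terms k <> 2 - j of row i,
   -1 for the two corrections 18 + k with k <> 2 - j. *)
Definition weight (i j : 'I_3) (t : 'I_21) : int :=
  let u := (t %% 6)%N in
  if (18 <= t)%N then - (t != 20 - j :> nat)%N%:Z
  else ((t %/ 6 == i)%N && ((u == 3 + j)%N || (u < 3)%N && (u != 2 - j)%N))%:Z.

Lemma entry_combination (R : comPzRingType) (A B : 'M[R]_3) (i j : 'I_3) :
  (A *m B) i j = \sum_(t < 21) (weight i j t)%:~R * p A B t.+1.
Proof.
have [row0 row1 row2] := row_identities _ A B i.
rewrite !big_ord_recr big_ord0 /=.
by case: (ord3P j) => ->; rewrite ?row0 ?row1 ?row2; move: (p A B) => P;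
  case: i {row0 row1 row2} => [[|[|[|//]]] Hi]; rewrite /weight !inordK //=; ring.
Qed.

Theorem mainTheorem3 :
  (forall (R : comPzRingType) (A B : 'M[R]_3) (r : 'I_3),
     let s := (6 * r)%N in
     let P := p A B in
     [/\ (A *m B) r (inord 0) = P (s + 4)%N + P (s + 1)%N + P (s + 2)%N - P 19%N - P 20%N,
         (A *m B) r (inord 1) = P (s + 5)%N + P (s + 1)%N + P (s + 3)%N - P 19%N - P 21%N
       & (A *m B) r (inord 2) = P (s + 6)%N + P (s + 2)%N + P (s + 3)%N - P 20%N - P 21%N])
  /\ mult3_computable_with 21.
Proof.
split; first exact: row_identities.
apply: (computable_of_products 21 left_A left_B right_A right_B weight
  (fun (R : comPzRingType) (A B : 'M[R]_3) (t : 'I_21) => p A B t.+1)).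
- exact: scheme_products.
- exact: entry_combination.
Qed.
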